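(* Let $\Lambda_f$ be a uniformly random numerical semigroup with Frobenius number $f$, and $m(\Lambda_f)$ its multiplicity. Then for every integer $k$: \[\lim_{f\to\infty,\ f \text{ even}} \mathbb{P}[f - 2m(\Lambda_f) = 2k] = \begin{cases} C_0^{-1} 2^{k-1} & k < 0,\\ 0 & k = 0,\\ C_0^{-1} 2^{-3k-1} S(2k) & k > 0;\end{cases}\] \[\lim_{f\to\infty,\ f \text{ odd}} \mathbb{P}[f - 2m(\Lambda_f) = 2k+1] = \begin{cases} C_1^{-1} 2^{(2k-1)/2} & k < 0,\\ C_1^{-1} 2^{-(6k+5)/2} S(2k+1) & k \geq 0.\end{cases}\]
   Context: A numerical semigroup is a subset $\Lambda \subseteq \mathbb{N}_0$ containing $0$, closed under addition, with finite complement; its multiplicity is $\min(\Lambda\setminus\{0\})$, its conductor is the least $c$ with $c + \mathbb{N}_0 \subseteq \Lambda$, and its Frobenius number is the conductor minus $1$. $\operatorname{Fr}(f)$ denotes the number of numerical semigroups with Frobenius number $f$, and $C_0 = \lim_{f\ \text{even}} 2^{-f/2}\operatorname{Fr}(f)$, $C_1 = \lim_{f\ \text{odd}} 2^{-f/2}\operatorname{Fr}(f)$ (these limits exist and are positive constants, by Backelin). For $j \geq 1$, $S(j)$ is the number of numerical semigroups with multiplicity $j+1$ and Frobenius number $3j+2$. *)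

From Stdlib Require Import Reals ClassicalEpsilon ZArith.
From Coquelicot Require Import Coquelicot.
From mathcomp Require Import all_boot.

Set Implicit Arguments.
Unset Strict Implicit.
Unset Printing Implicit Defensive.

Definition is_numerical_semigroup (L : nat -> Prop) : Prop :=
  L 0%N /\ (forall x y, L x -> L y -> L (x + y)%N) /\
  (exists N, forall n, (N <= n)%N -> L n).

Definition is_conductor (L : nat -> Prop) (c : nat) : Prop :=
  (forall n, (c <= n)%N -> L n) /\
  (forall c', (forall n, (c' <= n)%N -> L n) -> (c <= c')%N).

(* Frobenius number f (f a natural number) = conductor - 1, i.e. conductor = f+1 *)
Definition has_frobenius (L : nat -> Prop) (f : nat) : Prop := is_conductor L f.+1.

Definition is_multiplicity (L : nat -> Prop) (m : nat) : Prop :=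
  (0 < m)%N /\ L m /\ (forall n, (0 < n)%N -> L n -> (m <= n)%N).

(* Every numerical semigroup with Frobenius number f is of this form for a
   unique T (namely its trace on [0,f]), so counting the T below counts
   numerical semigroups with Frobenius number f. *)
Definition of_trunc (f : nat) (T : {set 'I_f.+1}) : nat -> Prop :=
  fun n => (f < n)%N \/ exists i : 'I_f.+1, nat_of_ord i = n /\ i \in T.

Definition pb (P : Prop) : bool := if excluded_middle_informative P then true else false.

Definition NSFr (f : nat) (Q : (nat -> Prop) -> Prop) : nat :=
  #|[set T : {set 'I_f.+1} |
      pb (is_numerical_semigroup (of_trunc T) /\ has_frobenius (of_trunc T) f
          /\ Q (of_trunc T))]|.

Definition Fr (f : nat) : nat := NSFr f (fun _ => True).

Definition S (j : nat) : nat := NSFr (3 * j + 2)%N (fun L => is_multiplicity L j.+1).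

Definition Prob (f : nat) (Q : (nat -> Prop) -> Prop) : R :=
  (INR (NSFr f Q) / INR (Fr f))%R.

Definition ev_diff (f : nat) (d : Z) : (nat -> Prop) -> Prop :=
  fun L => exists m, is_multiplicity L m /\ (Z.of_nat f - 2 * Z.of_nat m = d)%Z.

(* Write N(f, m) for the number of numerical semigroups with Frobenius number f
   and multiplicity m, so that the probabilities in question are N(f, m) / Fr(f).
   If f < 2m, a sum of two nonzero elements exceeds f, so every set containing
   0 and m and avoiding (0, m) and f is a semigroup: N(f, m) = 2^(f-m-1).
   No semigroup has Frobenius number 2m and multiplicity m.
   If 2m <= f < 3m, moving [m, 2m) up by one and [2m, f] up by two turns the
   semigroups counted by N(f, m) into those counted by N(f+2, m+1), up to the
   element 2m+1, which can be added or removed freely; hence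
   N(f+2, m+1) = 2 N(f, m), and starting from N(3d+2, d+1) = S(d) this gives
   N(f, m) = 2^(3m-f-1) S(f-2m).  Dividing by Fr(f) ~ C 2^(f/2) yields the limits;
   C is nonzero because Fr(f) >= N(f, floor(f/2) + 1), which is of order 2^(f/2). *)

From Stdlib Require Import Reals ZArith Lia Lra ClassicalEpsilon.
From Coquelicot Require Import Coquelicot.
From mathcomp Require Import all_boot zify.

Set Implicit Arguments.
Unset Strict Implicit.
Unset Printing Implicit Defensive.

Lemma pbP (P : Prop) : reflect P (pb P).
Proof. by rewrite /pb; case: excluded_middle_informative => p; constructor. Qed.

Lemma pb_eq (P Q : Prop) : (P <-> Q) -> pb P = pb Q.
Proof. by move=> PQ; apply/idP/idP => /pbP ?; apply/pbP; tauto. Qed.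

Section FiniteCounting.

Local Open Scope nat_scope.

Lemma card_ord_range n a b : b <= n -> #|[set i : 'I_n | a <= i < b]| = b - a.
Proof.
move=> bn; rewrite -sum1_card.
rewrite (eq_bigl (fun i : 'I_n => a <= i < b)) => [|i]; last by rewrite inE.
rewrite -(big_mkord (fun i => a <= i < b) (fun _ => 1)).
rewrite -(big_nat_widen _ _ _ (fun i => a <= i) (fun _ => 1) bn).
rewrite -[b - a]muln1 -sum_nat_const_nat (big_nat_widenl _ _ _ _ _ (leq0n a)).
exact: eq_bigl.
Qed.

Lemma card_sets_fixed_off (T : finType) (F : {set T}) (a : pred T) :
  #|[set X : {set T} | [forall x in ~: F, (x \in X) == a x]]| = 2 ^ #|F|.
Proof.
set A := [set x in ~: F | a x].
have -> : [set X : {set T} | [forall x in ~: F, (x \in X) == a x]] =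
          (fun Y => Y :|: A) @: powerset F.
  apply/setP => X; rewrite inE; apply/forall_inP/imsetP => [XA | [Y]].
    exists (X :&: F); first by rewrite inE subsetIr.
    apply/setP => x; rewrite !inE; case: (boolP (x \in F)) => xF.
      by rewrite andbT orbF.
    by rewrite andbF; apply/eqP/XA; rewrite inE xF.
  rewrite inE => /subsetP YF -> x; rewrite !inE => xF.
  by rewrite xF (contraNF (YF x)).
rewrite card_in_imset ?card_powerset // => Y1 Y2; rewrite !inE => /subsetP Y1F /subsetP Y2F E.
apply/setP => x; case: (boolP (x \in F)) => xF.
  by have /setP/(_ x) := E; rewrite !inE xF /= !orbF.
by rewrite (contraNF (Y1F x)) ?(contraNF (Y2F x)).
Qed.

Lemma card_free_point (aT rT : finType) (g : aT -> rT) (p : rT)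
    (P : pred {set aT}) (P' : pred {set rT}) :
  injective g -> p \notin codom g ->
  (forall Y, P' Y -> {subset Y :\ p <= codom g}) ->
  (forall (X : {set aT}) (b : bool), P' (g @: X :|: (if b then [set p] else set0)) = P X) ->
  #|[set Y | P' Y]| = 2 * #|[set X | P X]|.
Proof.
move=> ginj gp P'g P'E.
pose h (Xb : {set aT} * bool) := g @: Xb.1 :|: (if Xb.2 then [set p] else set0).
have p_img (X : {set aT}) : p \notin g @: X.
  by apply: contra gp => /imsetP[x _ ->]; apply: codom_f.
have p_h (X : {set aT}) b : (p \in h (X, b)) = b.
  by rewrite /h inE (negbTE (p_img X)); case: b; rewrite ?inE ?eqxx.
have h_del (X : {set aT}) b : h (X, b) :\ p = g @: X.
  apply/setP => y; rewrite /h !inE; case: (eqVneq y p) => [-> | yp] /=.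
    by rewrite (negbTE (p_img X)).
  by case: b; rewrite ?inE ?(negbTE yp) ?orbF.
have hinj : injective h.
  move=> [X1 b1] [X2 b2] E.
  have eb : b1 = b2 by rewrite -(p_h X1 b1) -(p_h X2 b2) E.
  have : g @: X1 = g @: X2 by rewrite -(h_del X1 b1) -(h_del X2 b2) E.
  by move/(imset_inj ginj) => ->; rewrite eb.
have -> : [set Y | P' Y] = h @: setX [set X | P X] setT.
  apply/setP => Y; rewrite inE; apply/idP/imsetP => [P'Y | [[X b]]]; last first.
    by rewrite !inE andbT => PX ->; rewrite /h P'E.
  have YE : Y = h (g @^-1: Y, p \in Y).
    apply/setP => y; case: (eqVneq y p) => [-> | yp]; first by rewrite p_h.
    have /setP/(_ y) := h_del (g @^-1: Y) (p \in Y); rewrite in_setD1 yp /= => ->.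
    apply/idP/imsetP => [Yy | [x]]; last by rewrite inE => gx ->.
    have /codomP[x yE] : y \in codom g by apply: (P'g _ P'Y); rewrite in_setD1 yp.
    by exists x; rewrite // inE -yE.
  exists (g @^-1: Y, p \in Y) => //.
  by rewrite !inE andbT -(P'E _ (p \in Y)) -/(h (_, _)) -YE.
by rewrite (card_imset _ hinj) cardsX cardsT card_bool mulnC.
Qed.

End FiniteCounting.

Section Traces.

Local Open Scope nat_scope.

Definition nat_mem n (T : {set 'I_n}) (x : nat) : bool := [exists i in T, val i == x].

Lemma nat_memP n (T : {set 'I_n}) x :
  reflect (exists2 i : 'I_n, i \in T & val i = x) (nat_mem T x).
Proof.
apply: (iffP existsP) => [[i /andP[iT /eqP <-]]|[i iT <-]]; first by exists i.
by exists i; rewrite iT eqxx.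
Qed.

Lemma nat_mem_ord n (T : {set 'I_n}) (i : 'I_n) : nat_mem T i = (i \in T).
Proof.
by apply/nat_memP/idP => [[j jT /val_inj <-] | iT] //; exists i.
Qed.

Lemma nat_mem_lt n (T : {set 'I_n}) x : nat_mem T x -> x < n.
Proof. by case/nat_memP=> i _ <-; apply: ltn_ord. Qed.

Lemma of_truncE f (T : {set 'I_f.+1}) x : of_trunc T x <-> (f < x) || nat_mem T x.
Proof.
split=> [[-> // | [i [<- iT]]] | /orP[fx | /nat_memP[i iT <-]]]; last by right; exists i.
  by rewrite nat_mem_ord iT orbT.
by left.
Qed.

Definition addclosed_upto f (s : nat -> bool) :=
  forall x y, s x -> s y -> x + y <= f -> s (x + y).

Definition least_pos m (s : nat -> bool) :=
  [/\ 0 < m, s m & forall x, 0 < x < m -> ~~ s x].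

Definition ns_trace f m (s : nat -> bool) :=
  [/\ s 0, ~~ s f, addclosed_upto f s & least_pos m s].

Section OfTrunc.

Variables (f : nat) (T : {set 'I_f.+1}).

Lemma of_trunc_semigroup :
  is_numerical_semigroup (of_trunc T) <-> nat_mem T 0 /\ addclosed_upto f (nat_mem T).
Proof.
have LT x : nat_mem T x -> of_trunc T x by move=> Tx; apply/of_truncE; rewrite Tx orbT.
split=> [[/of_truncE L0 [Ladd _]] | [T0 Tadd]].
  split=> [|x y /LT Lx /LT Ly xyf]; first by rewrite ltn0 in L0.
  by have /of_truncE := Ladd x y Lx Ly; rewrite ltnNge xyf.
split; first exact: LT.
split; last by exists f.+1 => n fn; apply/of_truncE; rewrite fn.
move=> x y /of_truncE Lx /of_truncE Ly; apply/of_truncE.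
case: (leqP (x + y) f) => [xyf | //]; rewrite Tadd ?orbT //.
  by case/orP: Lx => // fx; move: xyf; lia.
by case/orP: Ly => // fy; move: xyf; lia.
Qed.

Lemma of_trunc_frobenius : has_frobenius (of_trunc T) f <-> ~~ nat_mem T f.
Proof.
split=> [[_ Fmin] | Tf].
  apply/negP => Tf; suff: f < f by rewrite ltnn.
  apply: Fmin => n; rewrite leq_eqVlt.
  by case/orP=> [/eqP <- | fn]; apply/of_truncE; rewrite ?Tf ?fn ?orbT.
split=> [n fn | c Lc]; first by apply/of_truncE; rewrite fn.
rewrite ltnNge; apply/negP => cf; have /of_truncE := Lc f cf.
by rewrite ltnn (negbTE Tf).
Qed.

Lemma of_trunc_multiplicity m : m <= f ->
  is_multiplicity (of_trunc T) m <-> least_pos m (nat_mem T).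
Proof.
move=> mf; have LT x : x <= f -> of_trunc T x <-> nat_mem T x.
  by move=> xf; rewrite of_truncE ltnNge xf.
split=> [[m0 [/(LT m mf) Tm Lmin]] | [m0 Tm Tmin]].
  split=> // x /andP[x0 xm]; apply/negP => /(LT x) Lx.
  by have := Lmin x x0 (Lx ltac:(lia)); rewrite leqNgt xm.
split=> //; split; first exact/(LT m mf).
move=> x x0 /of_truncE /orP[fx | Tx]; rewrite leqNgt; apply/negP => xm; first lia.
by have := Tmin x; rewrite x0 xm Tx => /(_ isT).
Qed.

End OfTrunc.

Lemma ns_traceE f m (T : {set 'I_f.+1}) : m <= f ->
  is_numerical_semigroup (of_trunc T) /\ has_frobenius (of_trunc T) f /\
  is_multiplicity (of_trunc T) m <-> ns_trace f m (nat_mem T).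
Proof.
move=> mf; rewrite of_trunc_semigroup of_trunc_frobenius of_trunc_multiplicity //.
by split=> [[[T0 Tadd] [Tf Tm]] | [T0 Tf Tadd Tm]].
Qed.

End Traces.

Section Counting.

Local Open Scope nat_scope.

Definition Fr_mult f m := NSFr f (fun L => is_multiplicity L m).

Lemma Fr_multE f m : m <= f ->
  Fr_mult f m = #|[set T : {set 'I_f.+1} | pb (ns_trace f m (nat_mem T))]|.
Proof. by move=> mf; apply: eq_card => T; rewrite !inE; apply/pb_eq/ns_traceE. Qed.

Lemma NSFr_ev_diff f m (d : Z) : (Z.of_nat f - 2 * Z.of_nat m)%Z = d ->
  NSFr f (ev_diff f d) = Fr_mult f m.
Proof.
move=> fmd; apply: eq_card => T; rewrite !inE; apply: pb_eq.
split=> [[NS [Frob [m' [Lm' fm'd]]]] | [NS [Frob Lm]]]; last by do 2!split=> //; exists m.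
by have <- : m' = m by lia.
Qed.

Lemma Fr_mult_le_Fr f m : Fr_mult f m <= Fr f.
Proof.
apply/subset_leq_card/subsetP => T; rewrite !inE => /pbP[NS [Frob _]].
exact/pbP.
Qed.

End Counting.

Section BelowDouble.

Local Open Scope nat_scope.

Lemma least_pos_ge m s x : least_pos m s -> 0 < x -> s x -> m <= x.
Proof.
by case=> _ _ smin x0 sx; rewrite leqNgt; apply: contraL sx => xm; apply: smin; rewrite x0.
Qed.

Lemma addclosed_below_double f m s : least_pos m s -> f < 2 * m -> addclosed_upto f s.
Proof.
move=> sm fm x y sx sy xyf.
case: (posnP x) => [-> | x0]; first by rewrite add0n.
case: (posnP y) => [-> | y0]; first by rewrite addn0.
have := least_pos_ge sm x0 sx; have := least_pos_ge sm y0 sy; lia.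
Qed.

Lemma ns_trace_below_double f m s : m < f < 2 * m ->
  ns_trace f m s <-> forall x, x <= f -> ~~ (m < x < f) -> s x = (x == 0) || (x == m).
Proof.
move=> /andP[mf fm]; split=> [[s0 sf _ [m0 sm smin]] x xf xF | sfix].
  case: (posnP x) => [-> // | x0]; case: (ltngtP x m) => [xm | mx | -> //].
    by rewrite (negbTE (smin x _)) ?x0 //; lia.
  have -> : x = f by lia.
  by rewrite (negbTE sf); lia.
have m0 : 0 < m by lia.
have sm : least_pos m s.
  split=> // [|x /andP[x0 xm]]; first by rewrite sfix ?eqxx ?orbT //; lia.
  by rewrite sfix; lia.
split=> //; last exact: (addclosed_below_double sm).
  by rewrite sfix //; lia.
by rewrite sfix //; lia.
Qed.

Lemma Fr_mult_below_double f m : m < f < 2 * m -> Fr_mult f m = 2 ^ (f - m - 1).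
Proof.
move=> mfm; rewrite Fr_multE; last lia.
have <- : #|[set i : 'I_f.+1 | m.+1 <= i < f]| = f - m - 1 by rewrite card_ord_range; lia.
rewrite -(card_sets_fixed_off _ (fun i : 'I_f.+1 => (i == 0 :> nat) || (i == m :> nat))).
apply: eq_card => T; rewrite !inE; apply/pbP/forall_inP.
  move/(ns_trace_below_double _ mfm) => Tfix i; rewrite !inE => iF.
  by rewrite -nat_mem_ord Tfix // -ltnS.
move=> Tfix; apply/(ns_trace_below_double _ mfm) => x xf xF.
by have := Tfix (inord x); rewrite !inE -nat_mem_ord !inordK // => /(_ xF) /eqP.
Qed.

Lemma Fr_mult_double m : Fr_mult (2 * m) m = 0.
Proof.
rewrite Fr_multE ?leq_pmull //; apply/eqP; rewrite cards_eq0; apply/eqP/setP => T.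
rewrite !inE; apply/pbP => -[_ T2m Tadd [_ Tm _]].
by have := Tadd m m Tm Tm; rewrite addnn -mul2n leqnn (negbTE T2m) => /(_ isT).
Qed.

End BelowDouble.

Section ShiftUp.

Local Open Scope nat_scope.

Variable m : nat.

Definition shift_up y := if y < m then y else if y < 2 * m then y.+1 else y.+2.

Lemma shift_up_inj : injective shift_up.
Proof. by move=> y z; rewrite /shift_up; do ?case: ifP; lia. Qed.

Lemma shift_up_neq_m y : shift_up y != m.
Proof. by rewrite /shift_up; do ?case: ifP; lia. Qed.

Lemma shift_up_neq_free y : shift_up y != (2 * m).+1.
Proof. by rewrite /shift_up; do ?case: ifP; lia. Qed.

Lemma shift_up_bounds y : y <= shift_up y <= y.+2.
Proof. by rewrite /shift_up; do ?case: ifP; lia. Qed.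

Lemma shift_up_onto x : x != m -> x != (2 * m).+1 -> exists y, shift_up y = x.
Proof.
move=> xm x2m; exists (if x < m then x else if x <= 2 * m then x.-1 else x.-2).
by rewrite /shift_up; do ?case: ifP; lia.
Qed.

Variables (f : nat) (s s' : nat -> bool).
Hypothesis fm : 2 * m <= f < 3 * m.
Hypothesis s'_shift : forall y, s' (shift_up y) = s y.
Hypothesis s'_m : ~~ s' m.

Lemma shift_low x : x < m -> s' x = s x.
Proof. by move=> xm; rewrite -s'_shift /shift_up xm. Qed.

Lemma shift_mid x : m <= x < 2 * m -> s' x.+1 = s x.
Proof. by move=> xm; rewrite -s'_shift /shift_up; do ?case: ifP; lia. Qed.

Lemma shift_high x : 2 * m <= x -> s' x.+2 = s x.
Proof. by move=> xm; rewrite -s'_shift /shift_up; do ?case: ifP; lia. Qed.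

Lemma least_pos_shift : least_pos m.+1 s' <-> least_pos m s.
Proof.
have m0 : 0 < m by lia.
split=> [[_ sm smin] | [_ sm smin]].
  split=> // [|x /andP[x0 xm]]; first by rewrite -shift_mid ?leqnn //; lia.
  by rewrite -shift_low // smin // x0 ltnS ltnW.
split=> // [|x /andP[x0]]; first by rewrite shift_mid ?leqnn //; lia.
rewrite ltnS leq_eqVlt => /orP[/eqP -> // | xm].
by rewrite shift_low // smin // x0.
Qed.

Lemma addclosed_shift : least_pos m s -> addclosed_upto f.+2 s' <-> addclosed_upto f s.
Proof.
move=> sm; have sm' : least_pos m.+1 s' by apply/least_pos_shift.
split=> sadd x y sx sy xyf.
  case: (posnP x) => [-> | x0]; first by rewrite add0n.
  case: (posnP y) => [-> | y0]; first by rewrite addn0.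
  have := least_pos_ge sm x0 sx; have := least_pos_ge sm y0 sy => my mx.
  rewrite -shift_high; last lia.
  have -> : (x + y).+2 = x.+1 + y.+1 by lia.
  by apply: sadd; rewrite ?shift_mid //; lia.
case: (posnP x) => [-> | x0]; first by rewrite add0n.
case: (posnP y) => [-> | y0]; first by rewrite addn0.
have := least_pos_ge sm' x0 sx; have := least_pos_ge sm' y0 sy => my mx.
case: x x0 sx mx xyf => // x' _ sx mx; case: y y0 sy my => // y' _ sy my xyf.
rewrite (_ : x'.+1 + y'.+1 = (x' + y').+2) ?shift_high; try lia.
by apply: sadd; rewrite -?shift_mid //; lia.
Qed.

Lemma ns_trace_shift : ns_trace f.+2 m.+1 s' <-> ns_trace f m s.
Proof.
have s'0 : s' 0 = s 0 by rewrite shift_low //; lia.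
have s'f : s' f.+2 = s f by rewrite shift_high //; lia.
split=> [[s0 sf sadd /least_pos_shift sm] | [s0 sf sadd sm]].
  by split; rewrite -?s'0 -?s'f -?addclosed_shift.
by split; rewrite ?s'0 ?s'f ?addclosed_shift ?least_pos_shift.
Qed.

End ShiftUp.

Section ShiftOrd.

Local Open Scope nat_scope.

Variables f m : nat.
Hypothesis fm : 2 * m <= f < 3 * m.

Definition shift_ord (i : 'I_f.+1) : 'I_f.+3 := inord (shift_up m i).

Let free : 'I_f.+3 := inord (2 * m).+1.

Let freeE : nat_of_ord free = (2 * m).+1.
Proof. by rewrite inordK //; lia. Qed.

Lemma shift_ordE i : nat_of_ord (shift_ord i) = shift_up m i.
Proof. by rewrite inordK // ltnS; have := shift_up_bounds m i; have := ltn_ord i; lia. Qed.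

Lemma shift_ord_inj : injective shift_ord.
Proof. by move=> i j /(congr1 (@nat_of_ord _)); rewrite !shift_ordE => /shift_up_inj /val_inj. Qed.

Lemma shift_ord_neq_free i : shift_ord i != free.
Proof. by rewrite -val_eqE /= shift_ordE freeE shift_up_neq_free. Qed.

Section Image.

Variables (T : {set 'I_f.+1}) (b : bool).
Let Y := shift_ord @: T :|: (if b then [set free] else set0).

Lemma nat_mem_shift y : nat_mem Y (shift_up m y) = nat_mem T y.
Proof.
case: (leqP y f) => [yf | fy]; last first.
  have -> : shift_up m y = y.+2 by rewrite /shift_up ifN ?ifN //; lia.
  by apply/idP/idP => /nat_mem_lt; lia.
have -> : nat_mem T y = (inord y \in T) by rewrite -nat_mem_ord inordK.
have -> : shift_up m y = shift_ord (inord y) by rewrite shift_ordE inordK.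
rewrite nat_mem_ord inE mem_imset; last exact: shift_ord_inj.
by case: b; rewrite ?inE ?orbF // (negbTE (shift_ord_neq_free _)) orbF.
Qed.

Lemma nat_mem_shift_m : ~~ nat_mem Y m.
Proof.
apply/nat_memP => -[i]; rewrite inE => /orP[/imsetP[j _ ->] | ].
  by rewrite /= shift_ordE; apply/eqP/shift_up_neq_m.
by case: b; rewrite ?inE // => /eqP -> /=; rewrite freeE; lia.
Qed.

End Image.

Lemma shift_ord_onto (Y : {set 'I_f.+3}) :
  ns_trace f.+2 m.+1 (nat_mem Y) -> {subset Y :\ free <= codom shift_ord}.
Proof.
move=> [_ _ _ [_ _ Ymin]] y; rewrite in_setD1 => /andP[yfree yY].
have ym : val y != m.
  apply/eqP => ym; have := Ymin m; rewrite -[in nat_mem _ _]ym nat_mem_ord yY ltnSn andbT.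
  by move=> /(_ _)/negP; apply; lia.
have y2m : val y != (2 * m).+1 by rewrite -freeE val_eqE.
have [z zy] := shift_up_onto ym y2m.
have zf : z <= f by move: (ltn_ord y); rewrite -zy /shift_up; do ?case: ifP; lia.
by apply/codomP; exists (inord z); apply/val_inj; rewrite /= shift_ordE inordK.
Qed.

Lemma Fr_mult_shift : Fr_mult f.+2 m.+1 = 2 * Fr_mult f m.
Proof.
rewrite !Fr_multE; try lia.
apply: (card_free_point (p := free) shift_ord_inj) => [| Y /pbP /shift_ord_onto // | T b].
  by apply/codomP => -[i /eqP]; rewrite eq_sym (negbTE (shift_ord_neq_free i)).
apply/pb_eq/ns_trace_shift => //; [exact: nat_mem_shift | exact: nat_mem_shift_m].
Qed.

End ShiftOrd.

Section AboveDouble.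

Local Open Scope nat_scope.

Lemma Fr_mult_shift_iter d j : Fr_mult (3 * d + 2 + 2 * j) (d.+1 + j) = 2 ^ j * S d.
Proof.
elim: j => [|j IH]; first by rewrite !addn0 mul1n.
rewrite (_ : 3 * d + 2 + 2 * j.+1 = (3 * d + 2 + 2 * j).+2); last lia.
rewrite (_ : d.+1 + j.+1 = (d.+1 + j).+1) ?Fr_mult_shift //; try lia.
by rewrite IH expnS mulnA.
Qed.

Lemma Fr_mult_above_double f m : 2 * m < f < 3 * m ->
  Fr_mult f m = 2 ^ (3 * m - f - 1) * S (f - 2 * m).
Proof. by move=> fm; rewrite -Fr_mult_shift_iter; congr Fr_mult; lia. Qed.

End AboveDouble.

Section Limits.

Local Open Scope R_scope.

Lemma INR_expn2 i : INR (2 ^ i) = Rpower 2 (INR i).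
Proof.
rewrite Rpower_pow; last lra.
by elim: i => [|i IH] //; rewrite expnS -multE mult_INR IH /=; lra.
Qed.

Lemma INR_of_nat_add (i n : nat) (e : Z) :
  Z.of_nat i = (Z.of_nat n + e)%Z -> INR i = INR n + IZR e.
Proof. by move=> ie; rewrite !INR_IZR_INZ -plus_IZR ie. Qed.

Variables (f : nat -> nat) (a C : R).
Hypothesis f_half : forall n, INR (f n) / 2 = INR n + a.
Hypothesis Fr_lim : is_lim_seq (fun n => INR (Fr (f n)) / Rpower 2 (INR (f n) / 2)) C.

Lemma Fr_lim_neq0 (e : Z) (N : nat) :
  (forall n, (N <= n)%N ->
     exists2 i, Z.of_nat i = (Z.of_nat n + e)%Z & (2 ^ i <= Fr (f n))%N) ->
  C <> 0.
Proof.
move=> Fr_low.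
suff : Rbar_le (Rpower 2 (IZR e - a)) C.
  by have := exp_pos ((IZR e - a) * ln 2); rewrite /Rpower /Rbar_le; lra.
apply: (is_lim_seq_le_loc _ _ _ _ _ (is_lim_seq_const _) Fr_lim).
exists N => n /leP nN; have [i ie Fr_i] := Fr_low n nN.
rewrite f_half; apply/Rle_div_r; first exact: exp_pos.
rewrite -Rpower_plus (_ : IZR e - a + (INR n + a) = INR i); last first.
  by rewrite (INR_of_nat_add ie); ring.
by rewrite -INR_expn2; apply/le_INR/leP.
Qed.

Lemma is_lim_seq_Prob (d e : Z) (c N : nat) (L : R) : C <> 0 ->
  (forall n, (N <= n)%N -> exists2 i, Z.of_nat i = (Z.of_nat n + e)%Z &
     NSFr (f n) (ev_diff (f n) d) = (2 ^ i * c)%N) ->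
  L = / C * INR c * Rpower 2 (IZR e - a) ->
  is_lim_seq (fun n => Prob (f n) (ev_diff (f n) d)) L.
Proof.
move=> C0 count ->; set K := INR c * Rpower 2 (IZR e - a).
apply: (is_lim_seq_ext_loc (fun n => K / (INR (Fr (f n)) / Rpower 2 (INR (f n) / 2)))).
  exists N => n /leP nN; have [i ie count_n] := count n nN.
  rewrite /Prob count_n {1}/Rdiv Rinv_div f_half -multE mult_INR INR_expn2 (INR_of_nat_add ie).
  rewrite (_ : INR n + IZR e = IZR e - a + (INR n + a)); last ring.
  by rewrite [Rpower 2 (_ + (_ + _))]Rpower_plus /K /Rdiv; ring.
rewrite (_ : / C * INR c * _ = K / C); last by rewrite /K /Rdiv; ring.
exact: is_lim_seq_div' (is_lim_seq_const K) Fr_lim C0.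
Qed.

End Limits.

Local Open Scope R_scope.

Lemma half_even n : INR (2 * n) / 2 = INR n + 0.
Proof. by rewrite -multE mult_INR /=; lra. Qed.

Lemma half_odd n : INR (2 * n + 1) / 2 = INR n + / 2.
Proof. by rewrite -plusE -multE plus_INR mult_INR /=; lra. Qed.

Lemma lim_Prob_even (C0 : R) (k : Z) :
  is_lim_seq (fun n : nat => INR (Fr (2 * n)) / Rpower 2 (INR (2 * n) / 2)) C0 ->
  is_lim_seq (fun n : nat => Prob (2 * n) (ev_diff (2 * n) (2 * k)))
    (if (k <? 0)%Z then / C0 * Rpower 2 (IZR (k - 1))
     else if (k =? 0)%Z then 0
     else / C0 * Rpower 2 (IZR (- 3 * k - 1)) * INR (S (Z.to_nat (2 * k)))).
Proof.
move=> HC0; have C0nz : C0 <> 0.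
  apply: (Fr_lim_neq0 (f := fun n => (2 * n)%N) half_even HC0 (e := (-2)%Z) (N := 2%N)) => n n2.
  exists (2 * n - n.+1 - 1)%N; first lia.
  by rewrite -Fr_mult_below_double ?Fr_mult_le_Fr //; lia.
have lim := is_lim_seq_Prob (f := fun n => (2 * n)%N) half_even HC0 (d := (2 * k)%Z) C0nz.
case: (Z.ltb_spec k 0) => [kneg | kge0].
  apply: (lim (k - 1)%Z 1%N (Z.to_nat (1 - k))) => [n nN | ]; last by rewrite Rmult_1_r Rminus_0_r.
  rewrite (NSFr_ev_diff (m := Z.to_nat (Z.of_nat n - k))) ?Fr_mult_below_double; try lia.
  by exists (2 * n - Z.to_nat (Z.of_nat n - k) - 1)%N; rewrite ?muln1; lia.
case: (Z.eqb_spec k 0) => [-> | kpos].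
  apply: (is_lim_seq_ext_loc (fun _ => 0)); last exact: is_lim_seq_const.
  exists 0%N => n _; rewrite /Prob (NSFr_ev_diff (m := n)) ?Fr_mult_double; last lia.
  by rewrite /Rdiv Rmult_0_l.
apply: (lim (- 3 * k - 1)%Z (S (Z.to_nat (2 * k))) (Z.to_nat (3 * k + 2))) => [n nN | ].
  rewrite (NSFr_ev_diff (m := Z.to_nat (Z.of_nat n - k))) ?Fr_mult_above_double; try lia.
  by exists (3 * Z.to_nat (Z.of_nat n - k) - 2 * n - 1)%N; [lia | congr (_ * S _)%N; lia].
by rewrite Rminus_0_r; ring.
Qed.

Lemma lim_Prob_odd (C1 : R) (k : Z) :
  is_lim_seq (fun n : nat => INR (Fr (2 * n + 1)) / Rpower 2 (INR (2 * n + 1) / 2)) C1 ->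
  is_lim_seq (fun n : nat => Prob (2 * n + 1) (ev_diff (2 * n + 1) (2 * k + 1)))
    (if (k <? 0)%Z then / C1 * Rpower 2 (IZR (2 * k - 1) / 2)
     else / C1 * Rpower 2 (- IZR (6 * k + 5) / 2) * INR (S (Z.to_nat (2 * k + 1)))).
Proof.
move=> HC1; have C1nz : C1 <> 0.
  apply: (Fr_lim_neq0 (f := fun n => (2 * n + 1)%N) half_odd HC1 (e := (-1)%Z) (N := 1%N)) => n n1.
  exists (2 * n + 1 - n.+1 - 1)%N; first lia.
  by rewrite -Fr_mult_below_double ?Fr_mult_le_Fr //; lia.
have lim := is_lim_seq_Prob (f := fun n => (2 * n + 1)%N) half_odd HC1 (d := (2 * k + 1)%Z) C1nz.
case: (Z.ltb_spec k 0) => [kneg | kge0].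
  apply: (lim k 1%N (Z.to_nat (- k))) => [n nN | ].
    rewrite (NSFr_ev_diff (m := Z.to_nat (Z.of_nat n - k))) ?Fr_mult_below_double; try lia.
    by exists (2 * n + 1 - Z.to_nat (Z.of_nat n - k) - 1)%N; rewrite ?muln1; lia.
  by rewrite Rmult_1_r minus_IZR mult_IZR; congr (_ * Rpower 2 _); field.
apply: (lim (- 3 * k - 2)%Z (S (Z.to_nat (2 * k + 1))) (Z.to_nat (3 * k + 2))) => [n nN | ].
  rewrite (NSFr_ev_diff (m := Z.to_nat (Z.of_nat n - k))) ?Fr_mult_above_double; try lia.
  by exists (3 * Z.to_nat (Z.of_nat n - k) - (2 * n + 1) - 1)%N; [lia | congr (_ * S _)%N; lia].
rewrite (_ : - IZR (6 * k + 5) / 2 = IZR (- 3 * k - 2) - / 2); first ring.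
by rewrite minus_IZR plus_IZR !mult_IZR; field.
Qed.

Theorem theorem5p1 (C0 C1 : R)
  (HC0 : is_lim_seq (fun n : nat => (INR (Fr (2 * n)%nat) / Rpower 2 (INR (2 * n)%nat / 2))) (Rbar.Finite C0))
  (HC1 : is_lim_seq (fun n : nat => (INR (Fr (2 * n + 1)%nat) / Rpower 2 (INR (2 * n + 1)%nat / 2))) (Rbar.Finite C1))
  (k : Z) :
  is_lim_seq (fun n : nat => Prob (2 * n)%nat (ev_diff (2 * n)%nat (2 * k)%Z))
    (Rbar.Finite (if (k <? 0)%Z then (/ C0 * Rpower 2 (IZR (k - 1)))
     else if (k =? 0)%Z then 0
     else (/ C0 * Rpower 2 (IZR (- 3 * k - 1)) * INR (S (Z.to_nat (2 * k))))))
  /\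
  is_lim_seq (fun n : nat => Prob (2 * n + 1)%nat (ev_diff (2 * n + 1)%nat (2 * k + 1)%Z))
    (Rbar.Finite (if (k <? 0)%Z then (/ C1 * Rpower 2 (IZR (2 * k - 1) / 2))
     else (/ C1 * Rpower 2 (- IZR (6 * k + 5) / 2) * INR (S (Z.to_nat (2 * k + 1)))))).
Proof. by split; [apply: lim_Prob_even | apply: lim_Prob_odd]. Qed.
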